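(* Let $N\ge2$, $n=\binom N2$, and for $y\in\mathcal{C}_n$ let $f(y)=\frac1N T(G_y)$, where $T(G)$ is the number of triangles in the graph $G$. Then $\mathcal{D}(f)\le 5n^{3/4}$ and $\mathrm{Lip}(f)\le1$.
   Context: Points $y=(y_{i,j})_{1\le i<j\le N}\in\{-1,1\}^{\binom N2}=\mathcal{C}_n$ are identified with graphs $G_y=([N],E)$ where $(i,j)\in E$ iff $y_{i,j}=1$. For $g:\mathcal{C}_n\to\mathbb{R}$, $\partial_{i} g(y)$ is half the difference of $g$ at $y$ with the $i$-th coordinate set to $+1$ and to $-1$; $\nabla g=(\partial_i g)_i$; $\mathrm{Lip}(g)=\max_{i,y}|\partial_i g(y)|$; $\mathbf{GW}(K)=\mathbb{E}\sup_{x\in K}\langle x,\Gamma\rangle$ with $\Gamma$ standard Gaussian in $\mathbb{R}^n$; $\mathcal{D}(g)=\mathbf{GW}(\{\nabla g(y):y\in\mathcal{C}_n\}\cup\{0\})$. *)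

From HB Require Import structures.
From mathcomp Require Import all_boot all_order all_algebra.
From mathcomp Require Import all_classical all_reals all_analysis.
Set Implicit Arguments. Unset Strict Implicit. Unset Printing Implicit Defensive.
Import Order.TTheory GRing.Theory Num.Theory.
Local Open Scope ring_scope.

(* Coordinates of C_n: pairs (i,j) of vertices of [N] = 'I_N with i < j. *)
Definition edge (N : nat) := {e : 'I_N * 'I_N | (e.1 < e.2)%N}.

(* A point y of the cube {-1,1}^(N choose 2), encoded as a boolean finfun
   (true <-> +1, false <-> -1). *)
Definition cube (N : nat) := {ffun edge N -> bool}.

Definition adj N (y : cube N) (a b : 'I_N) : bool :=
  if @insub _ (fun e : 'I_N * 'I_N => (e.1 < e.2)%N) (edge N) (a, b) is Some e
  then y e else false.

Definition triangles N (y : cube N) : nat :=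
  #|[set t : 'I_N * 'I_N * 'I_N |
      [&& (t.1.1 < t.1.2)%N, (t.1.2 < t.2)%N,
          adj y t.1.1 t.1.2, adj y t.1.1 t.2 & adj y t.1.2 t.2]]|.

Definition setc N (y : cube N) (e : edge N) (b : bool) : cube N :=
  [ffun e' => if e' == e then b else y e'].

Section Cube.
Variable R : realType.

Definition pd N (g : cube N -> R) (e : edge N) (y : cube N) : R :=
  (g (setc y e true) - g (setc y e false)) / 2.

Definition Lip N (g : cube N -> R) : R :=
  \big[Num.max/0]_(e : edge N) \big[Num.max/0]_(y : cube N) `|pd g e y|.

(* Expectation under a standard Gaussian vector Gamma indexed by a finite type:
   the coordinates listed in s are integrated one after another against the
   standard normal density; the others are fixed by g. Applied to a
   nonnegative function this is the (Tonelli) integral against the product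
   Gaussian measure. *)
Fixpoint gauss_iter (I : eqType) (s : seq I) (F : (I -> R) -> \bar R)
    (g : I -> R) : \bar R :=
  match s with
  | [::] => F g
  | i :: s' =>
      (\int[@lebesgue_measure R]_t
         ((normal_pdf 0 1 t)%:E *
           gauss_iter s' F (fun j => if j == i then t else g j)))%E
  end.

Definition gauss_expect (I : finType) (F : (I -> R) -> \bar R) : \bar R :=
  gauss_iter (enum I) F (fun _ => 0).

(* D(g) = GW({grad g(y) : y in C_n} u {0})
        = E max(0, max_y <grad g(y), Gamma>). *)
Definition Dcomp N (g : cube N -> R) : \bar R :=
  gauss_expect (fun G : edge N -> R =>
    (\big[Num.max/0]_(y : cube N) \sum_(e : edge N) pd g e y * G e)%:E).

End Cube.

(* Flipping the pair e = {i, j} of G_y changes the triangle count by the number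
   of common neighbours of i and j, so grad f(y) = (2N)^-1 sum_k v(k, x_k), where
   x_k is the neighbourhood of k and v(k, x) is the indicator vector of the pairs
   inside x minus k.  Bounding each <v(k, x_k), G> by (L + exp(l <v(k, x_k), G> - L)) / l
   and summing over all N 2^N pairs (k, x) dominates max(0, max_y <grad f(y), G>)
   by a nonnegative combination of exponentials of linear forms in G, whose
   Gaussian expectation is explicit.  With L = N + l^2 N^2 / 2 this gives
   D(f) <= (L + 1) / (2 l), and l = n^(-1/4) gives 5 n^(3/4).  Since at most N
   vertices k contribute to a partial derivative, Lip(f) <= 1. *)

From HB Require Import structures.
From mathcomp Require Import all_boot all_order all_algebra.
From mathcomp Require Import all_classical all_reals all_analysis.
From mathcomp Require Import ring lra zify measurable_realfun.
Set Implicit Arguments. Unset Strict Implicit. Unset Printing Implicit Defensive.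
Import Order.TTheory GRing.Theory Num.Theory.
Local Open Scope ring_scope.

Lemma sum_pair_eq (T U : finType) (u : T) (P : U -> bool) :
  (\sum_(p : T * U) ((p.1 == u) && P p.2) = \sum_v P v)%N.
Proof.
rewrite -(pair_bigA _ (fun a v => ((a == u) && P v : nat))) (bigD1 u) //=.
rewrite [X in (_ + X)%N]big1 ?addn0; first by apply: eq_bigr => v _; rewrite eqxx.
by move=> a /negbTE au; apply: big1 => v _; rewrite au.
Qed.

Lemma sum_option (V : nmodType) (T : finType) (F : option T -> V) :
  \sum_o F o = F None + \sum_x F (Some x).
Proof.
have -> : index_enum (option T) = None :: map Some (index_enum T).
  by rewrite /index_enum !unlock /= /option_enum unlock.
by rewrite big_cons big_map.
Qed.

Lemma le_sum_expR (R : realType) (T : finType) (u : T -> R) (L l : R) a :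
  0 < l -> u a <= (L + \sum_x expR (l * u x - L)) / l.
Proof.
move=> l0; rewrite ler_pdivlMr // (bigD1 a) //= addrA.
have := expR_ge1Dx (l * u a - L); have := expR_ge0 (l * u a - L).
have : 0 <= \sum_(x | x != a) expR (l * u x - L).
  by rewrite sumr_ge0 // => x _; rewrite expR_ge0.
nra.
Qed.

Lemma exp2_le_expR (R : realType) n : (2 ^ n)%:R <= expR n%:R :> R.
Proof.
rewrite -[n%:R]mulr1 expRM_natl natrX lerXn2r ?nnegrE ?ler0n ?expR_ge0 //.
by have := expR_ge1Dx (1 : R); rewrite -[1 + 1]/(2%:R).
Qed.

Lemma powR_exprn (R : realType) (a x : R) p :
  0 <= a -> (a `^ x) ^+ p = a `^ (x * p%:R).
Proof. by move=> a0; rewrite powRrM powR_mulrn ?powR_ge0. Qed.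

Lemma sqr_le_4binom2 N : (2 <= N)%N -> (N * N <= 4 * 'C(N, 2))%N.
Proof. by move=> N2; have := mul_bin_diag N 1; rewrite bin1; nia. Qed.

Section GaussianExpectation.
Variable R : realType.

(* No measurability is needed: the integral of a nonnegative function is the
   supremum of the integrals of its simple minorants. *)
Lemma ge0_le_integralT d (T : measurableType d) (mu : measure T R)
    (f g : T -> \bar R) :
  (forall x, 0 <= f x)%E -> (forall x, f x <= g x)%E ->
  (\int[mu]_x f x <= \int[mu]_x g x)%E.
Proof.
move=> f0 fg; have g0 x : (0 <= g x)%E := le_trans (f0 x) (fg x).
rewrite !ge0_integralTE//; apply: ereal_sup_le => _ [h hf <-].
by exists h => // x; exact: le_trans (hf x) (fg x).
Qed.

Lemma gauss_iter_ge0 (I : eqType) (s : seq I) (F : (I -> R) -> \bar R) g :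
  (forall h, 0 <= F h)%E -> (0 <= gauss_iter s F g)%E.
Proof.
move=> F0; elim: s g => [|i s IHs] g /=; first exact: F0.
apply: integral_ge0 => t _; apply: mule_ge0; last exact: IHs.
by rewrite lee_fin normal_pdf_ge0.
Qed.

Lemma gauss_iter_le (I : eqType) (s : seq I) (F G : (I -> R) -> \bar R) g :
  (forall h, 0 <= F h)%E -> (forall h, F h <= G h)%E ->
  (gauss_iter s F g <= gauss_iter s G g)%E.
Proof.
move=> F0 FG; elim: s g => [|i s IHs] g /=; first exact: FG.
have pdf0 t : (0 <= (normal_pdf 0 1 t)%:E)%E by rewrite lee_fin normal_pdf_ge0.
apply: ge0_le_integralT => t; first by rewrite mule_ge0 ?gauss_iter_ge0.
by apply: lee_wpmul2l; [exact: pdf0 | exact: IHs].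
Qed.

Lemma gauss_expect_le (I : finType) (F G : (I -> R) -> \bar R) :
  (forall h, 0 <= F h)%E -> (forall h, F h <= G h)%E ->
  (gauss_expect F <= gauss_expect G)%E.
Proof. exact: gauss_iter_le. Qed.

(* Completing the square. *)
Lemma normal_pdf01_mul_expR (a t : R) :
  normal_pdf 0 1 t * expR (a * t) = expR (a ^+ 2 / 2) * normal_pdf a 1 t.
Proof.
rewrite /normal_pdf oner_eq0 /normal_fun mulrCA -mulrA; congr (_ * _).
rewrite -!expRD expr1n subr0; congr expR.
by field; rewrite ?pnatr_eq0 // -mulr2n pnatr_eq0.
Qed.

Lemma integral_normal_pdf01_expR (a c : R) :
  (\int[@lebesgue_measure R]_t (normal_pdf 0 1 t * (c * expR (a * t)))%:E
   = (c * expR (a ^+ 2 / 2))%:E)%E.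
Proof.
under eq_integral do rewrite mulrCA normal_pdf01_mul_expR mulrA EFinM.
rewrite integralZl ?integral_normal_pdf ?mule1//; exact: integrable_normal_pdf.
Qed.

Lemma integral_normal_pdf01_sum_expR (K : finType) (c a : K -> R) :
  (forall k, 0 <= c k) ->
  (\int[@lebesgue_measure R]_t
     ((normal_pdf 0 1 t)%:E * (\sum_k c k * expR (a k * t))%:E)
   = (\sum_k c k * expR (a k ^+ 2 / 2))%:E)%E.
Proof.
move=> c0; under eq_integral do rewrite -EFinM mulr_sumr -sumEFin.
rewrite ge0_integral_sum //.
- by rewrite -sumEFin; apply: eq_bigr => k _; exact: integral_normal_pdf01_expR.
- move=> k; apply/measurable_EFinP/measurable_funM;
    first exact: measurable_normal_pdf.
  by apply: measurable_funM => //; apply: measurableT_comp => //; exact: measurable_funM.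
- by move=> k t _; rewrite lee_fin !mulr_ge0 ?normal_pdf_ge0 ?expR_ge0.
Qed.

Lemma gauss_iter_sum_prod_expR (I K : finType) (w : K -> R) (a : K -> I -> R)
    (s : seq I) g :
  (forall k, 0 <= w k) -> uniq s ->
  gauss_iter s (fun h => (\sum_k w k * \prod_i expR (a k i * h i))%:E) g =
  (\sum_k w k * \prod_i
     (if i \in s then expR (a k i ^+ 2 / 2) else expR (a k i * g i)))%:E.
Proof.
move=> w0; elim: s g => [|i s IHs] g /=.
  by move=> _; congr EFin; apply: eq_bigr => k _; congr (_ * _);
    apply: eq_bigr => j _; rewrite in_nil.
case/andP => /negbTE is_s us; under eq_integral do rewrite IHs //.
pose P k := \prod_(j | j != i)
  (if j \in s then expR (a k j ^+ 2 / 2) else expR (a k j * g j)).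
have P0 k : 0 <= w k * P k.
  by rewrite mulr_ge0 ?prodr_ge0 // => j _; case: ifP; rewrite expR_ge0.
transitivity (\int[@lebesgue_measure R]_t ((normal_pdf 0 1 t)%:E *
    (\sum_k (w k * P k) * expR (a k i * t))%:E))%E.
  apply: eq_integral => t _; congr (_ * _%:E)%E; apply: eq_bigr => k _.
  rewrite (bigD1 i) //= is_s eqxx mulrA mulrAC; congr (_ * _ * _).
  by apply: eq_bigr => j /negbTE ->.
rewrite integral_normal_pdf01_sum_expR //; congr EFin; apply: eq_bigr => k _.
rewrite [in RHS](bigD1 i) //= in_cons eqxx mulrA mulrAC; congr (_ * _ * _).
by apply: eq_bigr => j /negbTE ji; rewrite in_cons ji.
Qed.

Lemma gauss_expect_sum_prod_expR (I K : finType) (w : K -> R) (a : K -> I -> R) :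
  (forall k, 0 <= w k) ->
  gauss_expect (fun h => (\sum_k w k * \prod_i expR (a k i * h i))%:E) =
  (\sum_k w k * \prod_i expR (a k i ^+ 2 / 2))%:E.
Proof.
move=> w0; rewrite /gauss_expect gauss_iter_sum_prod_expR ?enum_uniq //.
by congr EFin; apply: eq_bigr => k _; congr (_ * _); apply: eq_bigr => i _;
  rewrite mem_enum.
Qed.

End GaussianExpectation.

Section TriangleCount.
Variable N : nat.
Implicit Types (y : cube N) (e : edge N) (u v k : 'I_N).

Lemma adj_lt y u v : adj y u v -> (u < v)%N.
Proof. by rewrite /adj; case: insubP. Qed.

Lemma adj_setc y e b u v :
  adj (setc y e b) u v = if (u, v) == val e then b else adj y u v.
Proof.
rewrite /adj; case: insubP => [e' _ <-|uv]; first by rewrite ffunE -val_eqE.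
by case: eqP => // uv_e; move: uv; rewrite uv_e (valP e).
Qed.

Definition is_triangle y (t : 'I_N * 'I_N * 'I_N) : bool :=
  [&& (t.1.1 < t.1.2)%N, (t.1.2 < t.2)%N,
      adj y t.1.1 t.1.2, adj y t.1.1 t.2 & adj y t.1.2 t.2].

Lemma trianglesE y : triangles y = (\sum_t is_triangle y t)%N.
Proof.
rewrite /triangles cardsE -sum1_card big_mkcond /=.
by apply: eq_bigr => t _; rewrite unfold_in /is_triangle; case: ifP.
Qed.

Definition sadj y u v : bool := adj y u v || adj y v u.

Lemma sadjE y u v : sadj y u v = if (u < v)%N then adj y u v else adj y v u.
Proof.
rewrite /sadj; case: ltnP => uv.
  by case: (boolP (adj y v u)) => [/adj_lt|]; rewrite ?orbF //; lia.
by case: (boolP (adj y u v)) => [/adj_lt|] //; lia.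
Qed.

(* [k] is the third vertex of a triangle of [G_y] on the pair [e], whether or
   not [e] itself is an edge; the three refinements locate [k] relative to the
   endpoints [i < j] of [e]. *)
Definition apex y e k : bool :=
  [&& k != (val e).1, k != (val e).2, sadj y (val e).1 k & sadj y (val e).2 k].
Definition apex_above y e k : bool :=
  [&& ((val e).2 < k)%N, adj y (val e).1 k & adj y (val e).2 k].
Definition apex_between y e k : bool :=
  [&& ((val e).1 < k)%N, (k < (val e).2)%N, adj y (val e).1 k & adj y k (val e).2].
Definition apex_below y e k : bool :=
  [&& (k < (val e).1)%N, adj y k (val e).1 & adj y k (val e).2].

Lemma apex_split y e k :
  (apex_above y e k + apex_between y e k + apex_below y e k = apex y e k)%N.
Proof.
case: e => -[i j] /= ij; rewrite /apex /apex_above /apex_between /apex_below /=.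
rewrite !sadjE; case: (ltngtP k i) => [ki|ik|/val_inj->]; last first.
- by rewrite eqxx leq_gtF // ltnW.
- have -> : k != i by rewrite neq_ltn ik orbT.
  case: (ltngtP k j) => [kj|jk|/val_inj->] /=.
  + have -> : k != j by rewrite neq_ltn kj.
    by rewrite add0n addn0.
  + have -> : k != j by rewrite neq_ltn jk orbT.
    by rewrite !addn0.
  + by rewrite eqxx.
- have kj : (k < j)%N := ltn_trans ki ij.
  have -> : k != i by rewrite neq_ltn ki.
  have -> : k != j by rewrite neq_ltn kj.
  by rewrite leq_gtF // ltnW.
Qed.

Lemma is_triangle_setc y e t :
  (is_triangle (setc y e true) t = is_triangle (setc y e false) t
    + ((t.1 == val e) && apex_above y e t.2)
    + (((t.1.1, t.2) == val e) && apex_between y e t.1.2)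
    + (((t.1.2, t.2) == val e) && apex_below y e t.1.1) :> nat)%N.
Proof.
case: t => [[a b] c].
rewrite /is_triangle /apex_above /apex_between /apex_below /=.
rewrite !adj_setc; case: e => -[i j] /= ij; rewrite !xpair_eqE.
case: (a =P i) => [?|/eqP/negbTE ai]; case: (b =P j) => [?|/eqP/negbTE bj];
case: (c =P j) => [?|/eqP/negbTE cj]; case: (b =P i) => [?|/eqP/negbTE bi];
subst; rewrite ?eqxx ?ai ?bj ?cj ?bi /= ?andbF ?andbT ?addn0 ?add0n //.
all: try by rewrite ltnn ?andbF.
all: by rewrite ?ij ?(ltn_geF ij) ?andbF //; rewrite ltnn in ij.
Qed.

Lemma triangles_setc y e :
  triangles (setc y e true) = (triangles (setc y e false) + \sum_k apex y e k)%N.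
Proof.
rewrite !trianglesE; under eq_bigr do rewrite is_triangle_setc.
rewrite !big_split /= -!addnA; congr (_ + _)%N.
under [RHS]eq_bigr do rewrite -apex_split.
rewrite !big_split /= -!addnA sum_pair_eq; congr (_ + _)%N.
have swap_inj : injective (fun t : 'I_N * 'I_N * 'I_N => ((t.1.1, t.2), t.1.2)).
  by move=> [[? ?] ?] [[? ?] ?] [-> -> ->].
have rot_inj : injective (fun t : 'I_N * 'I_N * 'I_N => ((t.2, t.1.1), t.1.2)).
  by move=> [[? ?] ?] [[? ?] ?] [-> -> ->].
rewrite [X in (X + _)%N](reindex_inj swap_inj).
rewrite [X in (_ + X)%N](reindex_inj rot_inj); congr (_ + _)%N.
all: by rewrite -[RHS](sum_pair_eq (val e)); apply: eq_bigr => -[[a b] c].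
Qed.

End TriangleCount.

Definition triangle_density (R : realType) N (y : cube N) : R :=
  (triangles y)%:R / N%:R.

Section TriangleDensity.
Variables (R : realType) (N : nat).
Hypothesis N_ge2 : (2 <= N)%N.
Implicit Types (y : cube N) (e : edge N) (G : edge N -> R).

Notation f := (@triangle_density R N).

Let N_gt0 : 0 < N%:R :> R.
Proof. by rewrite ltr0n (leq_trans _ N_ge2). Qed.

Lemma pd_triangle_density y e :
  pd f e y = (\sum_k apex y e k)%:R / (2 * N%:R).
Proof.
rewrite /pd /triangle_density triangles_setc natrD.
by field; rewrite gt_eqF.
Qed.

Lemma Lip_triangle_density : Lip f <= 1.
Proof.
apply: bigmax_le => // e _; apply: bigmax_le => // y _.
rewrite pd_triangle_density ger0_norm ?divr_ge0 ?mulr_ge0 ?ler0n //.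
rewrite ler_pdivrMr ?mulr_gt0 // mul1r.
have : (\sum_(k < N) apex y e k <= N)%N.
  rewrite -[X in (_ <= X)%N]card_ord -sum1_card.
  by apply: leq_sum => k _; exact: leq_b1.
rewrite -(ler_nat R); have := N_gt0; lra.
Qed.

Definition nbhd y (k : 'I_N) : {ffun 'I_N -> bool} := [ffun v => sadj y v k].

Definition pairs_in (k : 'I_N) (x : {ffun 'I_N -> bool}) e : R :=
  [&& k != (val e).1, k != (val e).2, x (val e).1 & x (val e).2]%:R.

Lemma pairs_in_nbhd y k e : pairs_in k (nbhd y k) e = (apex y e k)%:R.
Proof. by rewrite /pairs_in !ffunE. Qed.

Lemma pd_triangle_density_dot y G :
  \sum_e pd f e y * G e =
  \sum_k (\sum_e pairs_in k (nbhd y k) e * G e) / (2 * N%:R).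
Proof.
under eq_bigr do rewrite pd_triangle_density natr_sum !mulr_suml.
rewrite exchange_big; apply: eq_bigr => k _; rewrite mulr_suml.
by apply: eq_bigr => e _; rewrite pairs_in_nbhd mulrAC.
Qed.

(* The exponential majorant of [<grad f(y), G>] is
   [\sum_o maj_weight L l o * \prod_e expR (maj_rate l o e * G e)]: the index
   [Some (k, x)] carries [exp (l <pairs_in k x, G> - L) / (2 N l)], and [None]
   (rate 0) the constant term [L / (2 l)]. *)
Definition maj_weight (L l : R) (o : option ('I_N * {ffun 'I_N -> bool})) : R :=
  if o is Some _ then expR (- L) / (2 * N%:R * l) else L / (2 * l).

Definition maj_rate (l : R) (o : option ('I_N * {ffun 'I_N -> bool})) e : R :=
  if o is Some p then l * pairs_in p.1 p.2 e else 0.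

Lemma maj_weight_ge0 L l o : 0 < l -> 0 <= L -> 0 <= maj_weight L l o.
Proof.
move=> l0 L0; case: o => [_|] /=; rewrite divr_ge0 ?expR_ge0 //.
  by rewrite !mulr_ge0 // ltW.
by rewrite mulr_ge0 // ltW.
Qed.

Lemma pd_triangle_density_dot_le y G L l : 0 < l ->
  \sum_e pd f e y * G e <=
  \sum_o maj_weight L l o * \prod_e expR (maj_rate l o e * G e).
Proof.
move=> l0; rewrite pd_triangle_density_dot sum_option /=.
set Q := fun k x => \sum_e pairs_in k x e * G e.
set c := expR (- L) / (2 * N%:R * l).
have -> : \prod_e expR (0 * G e) = 1 by rewrite big1 // => e _; rewrite mul0r expR0.
have expQ (p : 'I_N * {ffun 'I_N -> bool}) :
    maj_weight L l (Some p) * \prod_e expR (maj_rate l (Some p) e * G e) =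
    c * expR (l * Q p.1 p.2).
  case: p => k x; rewrite /= -expR_sum /Q mulr_sumr.
  by congr (_ * expR _); apply: eq_bigr => e _; rewrite mulrA.
rewrite (eq_bigr _ (fun p _ => expQ p)).
rewrite -(pair_bigA _ (fun k x => c * expR (l * Q k x))) /=.
suff -> : L / (2 * l) * 1 + \sum_k \sum_x c * expR (l * Q k x) =
    \sum_k (L + \sum_x expR (l * Q k x - L)) / l / (2 * N%:R).
  apply: ler_sum => k _; rewrite ler_wpM2r ?invr_ge0 ?mulr_ge0 ?ler0n //.
  exact: le_sum_expR.
rewrite -!mulr_suml big_split /= sumr_const card_ord.
have -> : \sum_k \sum_x c * expR (l * Q k x) = c * \sum_k \sum_x expR (l * Q k x).
  by rewrite mulr_sumr; apply: eq_bigr => k _; rewrite mulr_sumr.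
have -> : \sum_k \sum_x expR (l * Q k x - L) =
    expR (- L) * \sum_k \sum_x expR (l * Q k x).
  rewrite mulr_sumr; apply: eq_bigr => k _; rewrite mulr_sumr.
  by apply: eq_bigr => x _; rewrite addrC expRD.
by rewrite /c -mulr_natl; field; rewrite !gt_eqF.
Qed.

Lemma prod_maj_rate_le l p :
  \prod_e expR (maj_rate l (Some p) e ^+ 2 / 2) <= expR (l ^+ 2 * N%:R ^+ 2 / 2).
Proof.
have pairs_in_sq e : pairs_in p.1 p.2 e ^+ 2 <= 1.
  by rewrite /pairs_in; case: (_ && _); rewrite ?expr1n ?expr0n.
have card_edge : (#|{: edge N}| <= N * N)%N.
  rewrite card_sig (_ : (N * N)%N = #|{: 'I_N * 'I_N}|) ?max_card //.
  by rewrite card_prod card_ord.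
rewrite -expR_sum ler_expR.
apply: le_trans (_ : \sum_(e : edge N) l ^+ 2 / 2 <= _).
  apply: ler_sum => e _; rewrite [maj_rate _ _ _]/= exprMn.
  by rewrite ler_wpM2r // ler_piMr ?sqr_ge0.
rewrite sumr_const -[_ *+ #|_|]mulr_natr mulrAC ler_pM2r ?invr_gt0 ?ltr0n //.
by rewrite ler_wpM2l ?sqr_ge0 // -natrX ler_nat -mulnn.
Qed.

(* [L] is chosen so that the [N 2^N] exponential terms contribute at most
   [2^N e^-N / (2 l) <= 1 / (2 l)]. *)
Lemma maj_gauss_le l L : 0 < l -> L = N%:R + l ^+ 2 * N%:R ^+ 2 / 2 ->
  \sum_o maj_weight L l o * \prod_e expR (maj_rate l o e ^+ 2 / 2) <=
  (L + 1) / (2 * l).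
Proof.
move=> l0 LE; rewrite sum_option /=.
have -> : \prod_(e : edge N) expR ((0 : R) ^+ 2 / 2) = 1.
  by rewrite big1 // => e _; rewrite expr0n /= mul0r expR0.
set c := expR (- L) / (2 * N%:R * l).
have c0 : 0 <= c by rewrite divr_ge0 ?expR_ge0 // !mulr_ge0 // ltW.
apply: le_trans (_ : L / (2 * l) * 1 + \sum_(p : 'I_N * {ffun 'I_N -> bool})
    c * expR (l ^+ 2 * N%:R ^+ 2 / 2) <= _).
  by rewrite lerD2l; apply: ler_sum => p _; rewrite ler_wpM2l // prod_maj_rate_le.
rewrite sumr_const card_prod card_ord card_ffun card_bool card_ord.
rewrite -[c * _ *+ _]mulr_natl natrM.
have -> : N%:R * (2 ^ N)%:R * (c * expR (l ^+ 2 * N%:R ^+ 2 / 2)) =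
    (2 ^ N)%:R * expR (- N%:R) / (2 * l).
  have -> : expR (- N%:R) = expR (- L) * expR (l ^+ 2 * N%:R ^+ 2 / 2).
    by rewrite -expRD LE; congr expR; ring.
  by rewrite /c; field; rewrite !gt_eqF.
rewrite mulr1 [(L + 1) / _]mulrDl lerD2l ler_pM2r ?invr_gt0 ?mulr_gt0 //.
by rewrite expRN ler_pdivrMr ?expR_gt0 // mul1r exp2_le_expR.
Qed.

Lemma Dcomp_triangle_density_le l : 0 < l ->
  (Dcomp f <= ((N%:R + l ^+ 2 * N%:R ^+ 2 / 2 + 1) / (2 * l))%:E)%E.
Proof.
move=> l0; set L := N%:R + _.
have L0 : 0 <= L by rewrite /L addr_ge0 ?ler0n // divr_ge0 // mulr_ge0 // sqr_ge0.
pose maj G := \sum_o maj_weight L l o * \prod_e expR (maj_rate l o e * G e).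
have maj0 G : 0 <= maj G.
  by rewrite sumr_ge0 // => o _; rewrite mulr_ge0 ?maj_weight_ge0 ?prodr_ge0.
apply: le_trans (gauss_expect_le (G := fun G => (maj G)%:E) _ _) _.
- by move=> G; rewrite lee_fin bigmax_ge_id.
- move=> G; rewrite lee_fin; apply: bigmax_le => // y _.
  exact: pd_triangle_density_dot_le.
rewrite /maj gauss_expect_sum_prod_expR ?lee_fin ?maj_gauss_le // => o.
exact: maj_weight_ge0.
Qed.

End TriangleDensity.

Lemma Dcomp_bound_arith (R : realType) (r M : R) :
  0 < r -> 2 <= M -> M ^+ 2 <= 4 * r ^+ 4 ->
  (M + r^-1 ^+ 2 * M ^+ 2 / 2 + 1) / (2 * r^-1) <= 5 * r ^+ 3.
Proof.
move=> r0 M2 Mr.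
have -> : (M + r^-1 ^+ 2 * M ^+ 2 / 2 + 1) / (2 * r^-1) =
    ((M + 1) * r ^+ 2 * 2 + M ^+ 2) / (4 * r).
  by field; rewrite gt_eqF.
rewrite ler_pdivrMr ?mulr_gt0 //.
set t := r ^+ 2; have t0 : 0 <= t by rewrite sqr_ge0.
have rt : r ^+ 4 = t ^+ 2 by rewrite /t -exprM.
have Mt : M <= 2 * t by nra.
have -> : 5 * r ^+ 3 * (4 * r) = 20 * t ^+ 2 by rewrite -rt; ring.
nra.
Qed.

Theorem fact1p10 (R : realType) (N : nat) : (2 <= N)%N ->
  let n := 'C(N, 2) in
  let f := fun y : cube N => (triangles y)%:R / N%:R : R in
  (Dcomp f <= (5 * (n%:R `^ (3 / 4 : R)))%:E)%E /\ Lip f <= 1.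
Proof.
move=> N2 n f; have -> : f = @triangle_density R N by [].
split; last exact: Lip_triangle_density.
have n0 : 0 <= n%:R :> R by rewrite ler0n.
have r0 : 0 < n%:R `^ (1 / 4) :> R by rewrite powR_gt0 // ltr0n bin_gt0.
have l0 : 0 < (n%:R `^ (1 / 4))^-1 :> R by rewrite invr_gt0.
apply: le_trans (Dcomp_triangle_density_le N2 l0) _.
rewrite lee_fin (_ : 3 / 4 = 1 / 4 * 3%:R) -?powR_exprn //; last by field.
apply: Dcomp_bound_arith; rewrite ?ler_nat // powR_exprn //.
rewrite (_ : 1 / 4 * 4%:R = 1) ?powRr1 //; last by field.
by rewrite -natrX -natrM ler_nat -mulnn sqr_le_4binom2.
Qed.
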